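(* Let $d=2$, write $z=(z_1,z_2)$, and for $r\ge2$ let $D_r=\{z\in\mathbb{R}^2:z_1\ge0,\ 2\le|z|\le r\}$. There exists a constant $c>0$ such that for all Borel $U:\mathbb{R}^2\to[0,\infty]$ and all $r\ge2$, $$\int_{D_r}K(1,z,(r,0))\,U(z)\,dz\le c\sup_{w\in\mathbb{R}^2}\int_{|z|\le2}U(z+w)\,dz,$$ where $K(1,z,(r,0))=e^{-\frac12 r(|z|-z_1)}\log\big(1+(r|z|)^{-1/2}\big)\mathbf 1_{|z|\le r}$. *)

From HB Require Import structures.
From mathcomp Require Import all_boot all_order all_algebra.
From mathcomp Require Import all_classical all_reals all_analysis.
From mathcomp Require Import measurable_realfun.
Set Implicit Arguments. Unset Strict Implicit. Unset Printing Implicit Defensive.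
Import Order.TTheory GRing.Theory Num.Theory.
Local Open Scope ring_scope.
Local Open Scope classical_set_scope.

Definition norm2 {R : realType} (z : R * R) : R := Num.sqrt (z.1 ^+ 2 + z.2 ^+ 2).

Definition leb2 (R : realType) := ((@lebesgue_measure R) \x (@lebesgue_measure R))%E.

Definition Dr {R : realType} (r : R) : set (R * R) :=
  [set z | 0 <= z.1 /\ 2 <= norm2 z <= r].

Definition K1 {R : realType} (r : R) (z : R * R) : R :=
  expR (- (2^-1 * r * (norm2 z - z.1))) * ln (1 + (r * norm2 z) `^ (- 2^-1))
  * (\1_[set y | norm2 y <= r] z).

Definition ball2 {R : realType} : set (R * R) := [set z | norm2 z <= 2].

From HB Require Import structures.
From mathcomp Require Import all_boot all_order all_algebra.
From mathcomp Require Import all_classical all_reals all_analysis.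
From mathcomp Require Import measurable_realfun ring lra.
Import Order.TTheory GRing.Theory Num.Theory.
Local Open Scope ring_scope.
Local Open Scope classical_set_scope.

(* Cut the half plane {z1 >= 0} into the squares
     Q_{j,+-t} = [2j, 2j+2) x +-[2t, 2t+2),   j, t in {0, .., N},  N = floor(r/2),
   which cover D_r. On Q_{j,+-t} the kernel is bounded by the cell weight
     w_{j,t} = (r (j+1))^{-1/2} 2^{-t}:
   the logarithmic factor by log(1 + x) <= x and |z| >= j+1, the exponential
   factor since r(|z| - z1) >= (|z| + z1)(|z| - z1) = z2^2 >= 4t.
   Each square lies in a disc of radius 2, and by translation invariance of
   Lebesgue measure the integral of U over such a disc is at most
   S = sup_w \int_{|z|<=2} U(z+w) dz. Hence the integral is at most
   2 S \sum_{j,t} w_{j,t}, and \sum_{j<=N} (r(j+1))^{-1/2} <= 2 sqrt((N+1)/r) <= 2,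
   \sum_t 2^{-t} <= 2 give the bound 8 S. *)

Definition translate {R : realType} (w z : R * R) : R * R := (z.1 + w.1, z.2 + w.2).

Definition disc2 {R : realType} (w : R * R) : set (R * R) :=
  [set z | (z.1 - w.1) ^+ 2 + (z.2 - w.2) ^+ 2 <= 4].

(* One-dimensional Lebesgue measure is translation invariant: both sides agree
   on half-open intervals, which determine the measure. *)
Lemma lebesgue_measure_translate {R : realType} (c : R) (A : set R) : measurable A ->
  lebesgue_measure ((fun x => x + c) @^-1` A) = lebesgue_measure A.
Proof.
move=> mA; apply/esym.
change (lebesgue_measure A = pushforward lebesgue_measure
  ((fun x : R => x + c) : R -> measurableTypeR R) A).
apply: lebesgue_measure_unique => //=; first exact: measurable_funD.
move=> _ _ [[a b]] _ <-; rewrite /pushforward /=.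
rewrite [X in _ = lebesgue_measure X](_ : _ = `]a - c, b - c]%classic); last first.
  by apply/seteqP; split => x /=; rewrite !in_itv /= ltrBlDr lerBrDr.
rewrite !lebesgue_measure_itv /= !lte_fin ltrD2r.
by case: ifP => // _; rewrite -!EFinD; congr (_%:E); ring.
Qed.

Lemma measurable_translate {R : realType} (w : R * R) :
  measurable_fun [set: R * R] (translate w).
Proof.
apply/measurable_fun_pairP; split.
  by apply: measurable_funD => //; exact: measurable_fst.
by apply: measurable_funD => //; exact: measurable_snd.
Qed.

(* Planar Lebesgue measure is translation invariant: a product measure is
   determined by its values on rectangles. *)
Lemma leb2_translate {R : realType} (w : R * R) (X : set (R * R)) : measurable X ->
  pushforward (@leb2 R) (translate w) X = @leb2 R X.
Proof.
move=> mX; apply/esym.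
pose mu := @measure_function_pushforward__canonical__measure_function_Measure _ _
  (measurableTypeR R * measurableTypeR R)%type (measurableTypeR R * measurableTypeR R)%type
  R (@leb2 R) (translate w) (@measurable_translate R w).
apply: (@product_measure_unique _ _ _ _ _ _ _ mu) => // A B mA mB.
rewrite /mu /= /pushforward.
have -> : translate w @^-1` (A `*` B) =
    ((fun x : R => x + w.1) @^-1` A) `*` ((fun x : R => x + w.2) @^-1` B).
  by apply/seteqP; split => -[x y].
rewrite product_measure1E.
- by congr (_ * _)%E; exact: lebesgue_measure_translate.
- by rewrite -[X in measurable X]setTI; exact: measurable_funD.
- by rewrite -[X in measurable X]setTI; exact: measurable_funD.
Qed.

Lemma sqrt_le2 {R : realType} (s : R) : 0 <= s -> (Num.sqrt s <= 2) = (s <= 4).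
Proof.
move=> s0; have -> : (2 : R) = Num.sqrt 4.
  by rewrite (_ : (4 : R) = 2 ^+ 2) ?sqrtr_sqr ?ger0_norm //; ring.
by rewrite ler_sqrt.
Qed.

Lemma ball2_translate {R : realType} (w : R * R) : ball2 = translate w @^-1` disc2 w.
Proof.
apply/seteqP; split => z;
  by rewrite /ball2 /disc2 /norm2 /translate /= !addrK sqrt_le2 // addr_ge0 // sqr_ge0.
Qed.

Lemma measurable_disc2 {R : realType} (w : R * R) : measurable (disc2 w).
Proof.
pose sqdist (z : R * R) := (z.1 - w.1) ^+ 2 + (z.2 - w.2) ^+ 2.
have msqdist : measurable_fun [set: R * R] sqdist.
  apply: measurable_funD; apply: measurable_funX.
    by apply: measurable_funB => //; exact: measurable_fst.
  by apply: measurable_funB => //; exact: measurable_snd.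
rewrite [X in measurable X](_ : _ = setT `&` (sqdist @^-1` `]-oo, 4]%classic)).
  exact: msqdist.
by apply/seteqP; split => z /=; rewrite in_itv /= ?andbT // => -[].
Qed.

Lemma integral_disc2 {R : realType} (U : R * R -> \bar R) (w : R * R) :
  measurable_fun [set: R * R] U -> (forall z, (0 <= U z)%E) ->
  (\int[@leb2 R]_(y in disc2 w) U y = \int[@leb2 R]_(z in ball2) U (translate w z))%E.
Proof.
move=> mU U0; rewrite (ball2_translate w).
have := @ge0_integral_pushforward _ _ (measurableTypeR R * measurableTypeR R)%type
  (measurableTypeR R * measurableTypeR R)%type R (translate w) (@measurable_translate R w)
  (@leb2 R) (disc2 w) U (measurable_disc2 w) (measurable_funS measurableT (@subsetT _ _) mU)
  (fun y _ => U0 y).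
move=> <-.
apply: (@eq_measure_integral _ _ _ _ _ (@leb2 R)); first exact: measurable_translate.
by move=> mf A mA _; apply/esym; apply: leb2_translate; exact: mA.
Qed.

Definition ball_sup {R : realType} (U : R * R -> \bar R) : \bar R :=
  ereal_sup [set (\int[@leb2 R]_(z in ball2) U (translate w z))%E | w in [set: R * R]].

Lemma integral_disc2_le_sup {R : realType} (U : R * R -> \bar R) (w : R * R) :
  measurable_fun [set: R * R] U -> (forall z, (0 <= U z)%E) ->
  (\int[@leb2 R]_(z in disc2 w) U z <= ball_sup U)%E.
Proof. by move=> mU U0; rewrite integral_disc2 //; apply: ereal_sup_ubound; exists w. Qed.

(* \sum_{j <= n} j^{-1/2} <= 2 sqrt n, by sqrt (n+1) - sqrt n >= 1/(2 sqrt (n+1)). *)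
Lemma sum_inv_sqrt_le {R : realType} (n : nat) :
  \sum_(j < n) (Num.sqrt (j.+1)%:R)^-1 <= 2 * Num.sqrt (n%:R : R).
Proof.
elim: n => [|n IH]; first by rewrite big_ord0 sqrtr0 mulr0.
rewrite big_ord_recr /=; apply: le_trans (lerD IH (lexx _)) _.
set a := Num.sqrt (n%:R : R); set b := Num.sqrt (n.+1%:R : R).
have a0 : 0 <= a by exact: sqrtr_ge0.
have b0 : 0 < b by rewrite sqrtr_gt0 ltr0n.
have ab : b ^+ 2 = a ^+ 2 + 1 by rewrite !sqr_sqrtr ?ler0n // -natr1.
rewrite -(ler_pM2r b0) mulrDl mulVf ?gt_eqF //; nra.
Qed.

Lemma sum_half_pow_le {R : realType} (n : nat) : \sum_(t < n) (2^-1 : R) ^+ t <= 2.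
Proof.
suff : \sum_(t < n) (2^-1 : R) ^+ t <= 2 - 2 * 2^-1 ^+ n.
  by have := exprn_ge0 n (_ : 0 <= 2^-1 :> R); rewrite invr_ge0 ler0n => /(_ isT); lra.
elim: n => [|n IH]; first by rewrite big_ord0 expr0 mulr1 subrr.
by rewrite big_ord_recr exprS /=; lra.
Qed.

Lemma weighted_sum_le {R : realType} {n m : nat} {a : 'I_n -> 'I_m -> R} {c : R}
    {S : \bar R} :
  (forall i k, 0 <= a i k) -> \sum_(i < n) \sum_(k < m) a i k <= c -> (0 <= S)%E ->
  (\sum_(i < n) \sum_(k < m) (a i k)%:E * S <= c%:E * S)%E.
Proof.
move=> a0 ac S0.
have row i : (\sum_(k < m) (a i k)%:E * S = (\sum_(k < m) a i k)%:E * S)%E.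
  by rewrite -sumEFin ge0_sume_distrl // => k _; rewrite lee_fin.
rewrite (eq_bigr _ (fun i _ => row i)) -ge0_sume_distrl; last first.
  by move=> i _; rewrite lee_fin sumr_ge0.
by rewrite sumEFin lee_wpmul2r // lee_fin.
Qed.

Lemma lee_sum2_term {R : realType} (n m : nat) (F : 'I_n -> 'I_m -> \bar R)
    (i : 'I_n) (k : 'I_m) :
  (forall i k, (0 <= F i k)%E) -> (F i k <= \sum_(i' < n) \sum_(k' < m) F i' k')%E.
Proof.
move=> F0; rewrite (bigD1 i) //= (bigD1 k) //= -addeA leeDl //.
by rewrite adde_ge0 // sume_ge0 // => i' _; rewrite sume_ge0.
Qed.

Lemma norm2_sqr {R : realType} (z : R * R) : norm2 z ^+ 2 = z.1 ^+ 2 + z.2 ^+ 2.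
Proof. by rewrite /norm2 sqr_sqrtr // addr_ge0 // sqr_ge0. Qed.

Lemma norm2_ge0 {R : realType} (z : R * R) : 0 <= norm2 z.
Proof. exact: sqrtr_ge0. Qed.

Lemma norm2_coord_le {R : realType} (z : R * R) : `|z.1| <= norm2 z /\ `|z.2| <= norm2 z.
Proof.
have rsq := norm2_sqr z; have rho0 := norm2_ge0 z.
rewrite -[z.1 ^+ 2]real_normK ?num_real // -[z.2 ^+ 2]real_normK ?num_real // in rsq.
by have := normr_ge0 z.1; have := normr_ge0 z.2; split; nra.
Qed.

Lemma ln1p_inv_sqrt_ge0 {R : realType} (x : R) : 0 <= ln (1 + x `^ (- 2^-1)).
Proof. by apply: ln_ge0; rewrite lerDl; exact: powR_ge0. Qed.

Lemma K1_ge0 {R : realType} (r : R) (z : R * R) : 0 <= K1 r z.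
Proof.
rewrite /K1 indicE; apply: mulr_ge0; last by rewrite ler0n.
by rewrite mulr_ge0 ?expR_ge0 ?ln1p_inv_sqrt_ge0.
Qed.

(* The logarithmic factor: log (1 + y) <= y for y = x^{-1/2}. *)
Lemma ln1p_inv_sqrt_le {R : realType} (x : R) : 0 < x ->
  ln (1 + x `^ (- 2^-1)) <= (Num.sqrt x)^-1.
Proof.
move=> x0; rewrite powRN powR12_sqrt; last exact: ltW.
by rewrite -[X in _ <= X]expRK ler_ln ?posrE ?expR_gt0 // expR_ge1Dx.
Qed.

(* e^{-t} <= 2^{-t}, since e >= 2. *)
Lemma expRN_nat_le {R : realType} (t : nat) : expR (- (t%:R : R)) <= 2^-1 ^+ t.
Proof.
have e1 : expR (-1 : R) <= 2^-1.
  rewrite expRN lef_pV2 ?posrE ?expR_gt0 //.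
  by have := expR_ge1Dx (1 : R); rewrite (_ : 1 + 1 = 2 :> R).
rewrite -mulN1r expRM_natr; elim: t => [|t IH]; first by rewrite !expr0.
by rewrite !exprS; apply: ler_pM.
Qed.

(* The exponential factor: for |z| <= r, r (|z| - z1) >= (|z| + z1)(|z| - z1) = z2^2,
   which is at least 4t when |z2| >= 2t. *)
Lemma exp_factor_le {R : realType} (r : R) (z : R * R) (t : nat) :
  0 <= z.1 -> norm2 z <= r -> t%:R * 2 <= `|z.2| ->
  expR (- (2^-1 * r * (norm2 z - z.1))) <= 2^-1 ^+ t.
Proof.
move=> z10 rhor tz; apply: le_trans (expRN_nat_le t); rewrite ler_expR lerN2.
set rho := norm2 z in rhor *; set T := (t%:R : R).
have rsq : rho ^+ 2 = z.1 ^+ 2 + z.2 ^+ 2 := norm2_sqr z.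
have rho0 : 0 <= rho := norm2_ge0 z.
have z1rho : z.1 <= rho by nra.
have TT : T <= T ^+ 2.
  rewrite /T -natrX ler_nat; case: t {tz T} => // t.
  by rewrite expnS leq_pmulr.
have z2sq : 4 * T ^+ 2 <= z.2 ^+ 2.
  rewrite -[z.2 ^+ 2]real_normK ?num_real //; have := normr_ge0 z.2.
  have : 0 <= T by rewrite ler0n.
  nra.
have : (rho + z.1) * (rho - z.1) <= 2 * r * (rho - z.1) by apply: ler_wpM2r; lra.
nra.
Qed.

(* The bound of the kernel on the cell [2j, 2j+2) x +-[2t, 2t+2). *)
Definition cell_weight {R : realType} (r : R) (j t : nat) : R :=
  (Num.sqrt (r * j.+1%:R))^-1 * 2^-1 ^+ t.

Lemma cell_weight_ge0 {R : realType} (r : R) (j t : nat) : 0 <= cell_weight r j t.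
Proof. by rewrite mulr_ge0 ?exprn_ge0 // invr_ge0 sqrtr_ge0. Qed.

Lemma K1_le_cell_weight {R : realType} (r : R) (z : R * R) (j t : nat) :
  2 <= r -> Dr r z -> j%:R * 2 <= z.1 -> t%:R * 2 <= `|z.2| ->
  K1 r z <= cell_weight r j t.
Proof.
move=> r2 [z10 /andP[rho2 rhor]] jz tz.
rewrite /K1 indicE mem_set // mulr1 mulrC /cell_weight.
apply: ler_pM; rewrite ?ln1p_inv_sqrt_ge0 ?expR_ge0 ?exp_factor_le //.
have rsq := norm2_sqr z.
have j1rho : j.+1%:R <= norm2 z by rewrite -natr1; nra.
have r0 : 0 < r by lra.
have rho0 : 0 < norm2 z by lra.
apply: (le_trans (ln1p_inv_sqrt_le _ (mulr_gt0 r0 rho0))).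
rewrite lef_pV2 ?posrE ?sqrtr_gt0 ?mulr_gt0 ?ltr0n //.
by rewrite ler_sqrt ?(ltW (mulr_gt0 r0 rho0)) // ler_wpM2l // ltW.
Qed.

(* The weights of the cells meeting D_r sum to at most 4: the sum factorises,
   and the j-sum is at most 2 sqrt((N+1)/r) <= 2 because N+1 <= r. *)
Lemma sum_cell_weight_le {R : realType} (r : R) : 2 <= r ->
  \sum_(j < (Num.truncn (r / 2)).+1) \sum_(t < (Num.truncn (r / 2)).+1)
    cell_weight r j t <= 4.
Proof.
move=> r2; set N := (Num.truncn (r / 2)).+1.
have r0 : 0 < r by lra.
have Nr : (N%:R : R) <= r.
  have r20 : 0 <= r / 2 by lra.
  have /andP[Nr2 _] := truncn_itv r20.
  by rewrite /N -[(Num.truncn _).+1%:R]natr1; lra.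
have row_le : \sum_(j < N) (Num.sqrt (r * j.+1%:R))^-1 <= 2.
  have split_sqrt (j : 'I_N) : (Num.sqrt (r * j.+1%:R))^-1 =
      (Num.sqrt r)^-1 * (Num.sqrt j.+1%:R)^-1 by rewrite sqrtrM ?invfM // ltW.
  rewrite (eq_bigr _ (fun j _ => split_sqrt j)).
  rewrite -mulr_sumr; apply: le_trans (ler_wpM2l _ (sum_inv_sqrt_le N)) _.
    by rewrite invr_ge0 sqrtr_ge0.
  have sr : 0 < Num.sqrt r by rewrite sqrtr_gt0.
  have sN : Num.sqrt (N%:R : R) <= Num.sqrt r by rewrite ler_sqrt //; lra.
  by rewrite mulrCA -[X in _ <= X]mulr1 ler_wpM2l // ler_pdivrMl // mulr1.
under eq_bigr do rewrite -mulr_sumr.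
rewrite -mulr_suml (_ : (4 : R) = 2 * 2); last lra.
by rewrite ler_pM ?sum_half_pow_le ?sumr_ge0 // => i _;
  rewrite ?exprn_ge0 ?invr_ge0 ?sqrtr_ge0.
Qed.

Lemma half_floor_cell {R : realType} (r x : R) : 0 <= x <= r ->
  exists2 j : nat, (j < (Num.truncn (r / 2)).+1)%N & j%:R * 2 <= x < j%:R * 2 + 2.
Proof.
case/andP=> x0 xr; exists (Num.truncn (x / 2)).
  by rewrite ltnS le_truncn // ler_pM2r.
have x20 : 0 <= x / 2 by lra.
have /andP[jx xj] := truncn_itv x20.
have xj' : x / 2 < (Num.truncn (x / 2))%:R + 1 by rewrite natr1.
by apply/andP; split; lra.
Qed.

Lemma square_sub_disc2 {R : realType} (c z : R * R) :
  `|z.1 - c.1| <= 1 -> `|z.2 - c.2| <= 1 -> disc2 c z.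
Proof.
rewrite /disc2 /= -[(z.1 - c.1) ^+ 2]real_normK ?num_real //.
rewrite -[(z.2 - c.2) ^+ 2]real_normK ?num_real //.
by have := normr_ge0 (z.1 - c.1); have := normr_ge0 (z.2 - c.2); nra.
Qed.

Definition upper_center {R : realType} (j t : nat) : R * R := (j%:R * 2 + 1, t%:R * 2 + 1).
Definition lower_center {R : realType} (j t : nat) : R * R := (j%:R * 2 + 1, - (t%:R * 2 + 1)).

Lemma cell_sub_discs {R : realType} (z : R * R) (j t : nat) :
  j%:R * 2 <= z.1 < j%:R * 2 + 2 -> t%:R * 2 <= `|z.2| < t%:R * 2 + 2 ->
  disc2 (upper_center j t) z \/ disc2 (lower_center j t) z.
Proof.
move=> /andP[j1 j2] /andP[t1 t2].
have d1 c : c = j%:R * 2 + 1 -> `|z.1 - c| <= 1 by move=> ->; rewrite ler_norml; lra.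
have [z2p|z2n] := lerP 0 z.2; [left | right]; apply: square_sub_disc2; rewrite ?d1 //=.
  by rewrite ger0_norm // in t1 t2; rewrite ler_norml; lra.
by rewrite ltr0_norm // in t1 t2; rewrite ler_norml; lra.
Qed.

Definition cover_term {R : realType} (r : R) (U : R * R -> \bar R) (j t : nat)
    (z : R * R) : \bar R :=
  ((cell_weight r j t)%:E *
   ((U \_ (disc2 (upper_center j t))) z + (U \_ (disc2 (lower_center j t))) z))%E.

Lemma cover_term_ge0 {R : realType} (r : R) (U : R * R -> \bar R) (j t : nat) (z : R * R) :
  (forall z, (0 <= U z)%E) -> (0 <= cover_term r U j t z)%E.
Proof.
by move=> U0; rewrite mule_ge0 ?lee_fin ?cell_weight_ge0 // adde_ge0 // erestrict_ge0.
Qed.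

Lemma K1_le_cover {R : realType} (r : R) (U : R * R -> \bar R) (z : R * R) :
  2 <= r -> (forall z, (0 <= U z)%E) -> Dr r z ->
  ((K1 r z)%:E * U z <= \sum_(j < (Num.truncn (r / 2)).+1)
                          \sum_(t < (Num.truncn (r / 2)).+1) cover_term r U j t z)%E.
Proof.
move=> r2 U0 Dz; have [z10 /andP[_ rhor]] := Dz.
have [z1rho z2rho] := norm2_coord_le z.
have [j jN zj] : exists2 j : nat, (j < (Num.truncn (r / 2)).+1)%N &
    j%:R * 2 <= z.1 < j%:R * 2 + 2.
  by apply: half_floor_cell; rewrite z10 (le_trans (ler_norm _) (le_trans z1rho rhor)).
have [t tN zt] : exists2 t : nat, (t < (Num.truncn (r / 2)).+1)%N &
    t%:R * 2 <= `|z.2| < t%:R * 2 + 2.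
  by apply: half_floor_cell; rewrite normr_ge0 (le_trans z2rho rhor).
have /andP[jz _] := zj; have /andP[tz _] := zt.
set N := (Num.truncn (r / 2)).+1 in jN tN *.
apply: (le_trans _ (@lee_sum2_term R N N (fun j t => cover_term r U j t z)
  (Ordinal jN) (Ordinal tN) (fun j t => cover_term_ge0 r U j t z U0))).
apply: lee_pmul; rewrite ?lee_fin ?K1_ge0 ?K1_le_cell_weight //.
have restrict_in c : disc2 c z -> (U \_ (disc2 c)) z = U z by move=> ?; rewrite patchT ?inE.
have [/restrict_in -> | /restrict_in ->] := cell_sub_discs z j t zj zt.
  by rewrite leeDl // erestrict_ge0.
by rewrite leeDr // erestrict_ge0.
Qed.

Lemma integral_cover_term_le {R : realType} (r : R) (U : R * R -> \bar R) (j t : nat) :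
  measurable_fun [set: R * R] U -> (forall z, (0 <= U z)%E) ->
  (\int[@leb2 R]_z cover_term r U j t z
    <= (cell_weight r j t)%:E * (ball_sup U + ball_sup U))%E.
Proof.
move=> mU U0.
have mres c : measurable_fun [set: R * R] (U \_ (disc2 c)).
  by apply/(measurable_restrictT _ (measurable_disc2 c)); exact: measurable_funS mU.
have res0 c z : (0 <= (U \_ (disc2 c)) z)%E by rewrite erestrict_ge0.
rewrite ge0_integralZl ?lee_fin ?cell_weight_ge0 //; last 2 first.
- by apply: emeasurable_funD; apply: mres.
- by move=> z _; rewrite adde_ge0.
apply: lee_wpmul2l; first by rewrite lee_fin cell_weight_ge0.
rewrite ge0_integralD //; [|exact: mres..].
by apply: leeD; rewrite -integral_mkcond; exact: integral_disc2_le_sup.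
Qed.

Lemma integral_cover_le {R : realType} (r : R) (N : nat) (U : R * R -> \bar R) :
  measurable_fun [set: R * R] U -> (forall z, (0 <= U z)%E) ->
  (\int[@leb2 R]_z \sum_(j < N) \sum_(t < N) cover_term r U j t z
    <= \sum_(j < N) \sum_(t < N) (cell_weight r j t)%:E * (ball_sup U + ball_sup U))%E.
Proof.
move=> mU U0.
have cover0 j t z : (0 <= cover_term r U j t z)%E := cover_term_ge0 r U j t z U0.
have mcover j t : measurable_fun [set: R * R] (cover_term r U j t).
  apply: measurable_funeM; apply: emeasurable_funD;
  by apply/(measurable_restrictT _ (measurable_disc2 _)); exact: measurable_funS mU.
have integral_row j : (\int[@leb2 R]_z \sum_(t < N) cover_term r U j t z
    = \sum_(t < N) \int[@leb2 R]_z cover_term r U j t z)%E.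
  by rewrite ge0_integral_sum // => t; apply: mcover.
rewrite ge0_integral_sum //; last 2 first.
- by move=> j; apply: emeasurable_sum => t; apply: mcover.
- by move=> j z _; rewrite sume_ge0.
rewrite (eq_bigr _ (fun (j : 'I_N) _ => integral_row j)).
by apply: lee_sum => j _; apply: lee_sum => t _; exact: integral_cover_term_le.
Qed.

(* Monotonicity of the integral of nonnegative functions needs no measurability,
   the integral being a supremum over simple functions; it spares us proving K1
   measurable. *)
Lemma ge0_le_integral_nonmeasurable d (T : measurableType d) (R : realType)
    (mu : {measure set T -> \bar R}) (D : set T) (f g : T -> \bar R) :
  (forall x, D x -> (0 <= f x)%E) -> (forall x, D x -> (f x <= g x)%E) ->
  (\int[mu]_(x in D) f x <= \int[mu]_(x in D) g x)%E.
Proof.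
move=> f0 fg; have g0 x : D x -> (0 <= g x)%E by move=> Dx; exact: le_trans (f0 _ Dx) (fg _ Dx).
rewrite !ge0_integralE //; apply: le_ereal_sup => _ /= [h hf <-]; exists h => //= x.
by apply: le_trans (hf x) _; rewrite /patch; case: ifP => // /set_mem; exact: fg.
Qed.

Theorem lemma4p4 (R : realType) :
  exists c : R, 0 < c /\
    forall (U : R * R -> \bar R), measurable_fun [set: R * R] U -> (forall z, (0 <= U z)%E) ->
    forall r : R, 2 <= r ->
      (\int[@leb2 R]_(z in Dr r) ((K1 r z)%:E * U z)
        <= c%:E * ereal_sup [set \int[@leb2 R]_(z in ball2) U ((z.1 + w.1)%R, (z.2 + w.2)%R)
                             | w in [set: R * R]])%E.
Proof.
exists 8; split; first lra.
move=> U mU U0 r r2; rewrite -/(ball_sup U).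
set N := (Num.truncn (r / 2)).+1; set S := ball_sup U.
have S0 : (0 <= S)%E.
  apply: le_trans _ (integral_disc2_le_sup U 0 mU U0).
  by apply: integral_ge0 => z _.
apply: (@le_trans _ _ (\int[@leb2 R]_z \sum_(j < N) \sum_(t < N) cover_term r U j t z)%E).
  rewrite integral_mkcond; apply: ge0_le_integral_nonmeasurable => z _; rewrite /patch.
    by case: ifP => // _; rewrite mule_ge0 ?lee_fin ?K1_ge0.
  case: ifP => [/set_mem|_]; first exact: K1_le_cover.
  by rewrite sume_ge0 // => j _; rewrite sume_ge0 // => t _; exact: cover_term_ge0.
apply: le_trans (integral_cover_le r N U mU U0) _.
apply: le_trans (weighted_sum_le (fun j t => cell_weight_ge0 r j t)
  (sum_cell_weight_le r r2) (adde_ge0 S0 S0)) _.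
have four_four : (4 + 4 : R) = 8 by lra.
by rewrite ge0_muleDr // -ge0_muleDl ?lee_fin // -EFinD four_four.
Qed.
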